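(* Let $\theta\in\mathbb{R}$, $\alpha_1>0$, $\alpha_2>0$, let $R_\theta=\begin{bmatrix}\cos\theta&-\sin\theta\\ \sin\theta&\cos\theta\end{bmatrix}$ acting on $\mathbb{R}^2$, and set $R_1=(1-\alpha_1)\mathrm{Id}+\alpha_1R_\theta$, $R_2=(1-\alpha_2)\mathrm{Id}-\alpha_2R_\theta$, $R=R_2R_1$, and $$\kappa=\alpha_1+\alpha_2-2\alpha_1\alpha_2\sin^2\theta-(\alpha_1-\alpha_2)\cos\theta.$$ Then $R_1$ is $\alpha_1$-conically nonexpansive, $R_2$ is $\alpha_2$-conically nonexpansive, and if $\kappa<0$ then $R$ is not conically nonexpansive (i.e., there is no $\alpha>0$ for which $R$ is $\alpha$-conically nonexpansive).
   Context: For $\alpha>0$, an operator $T\colon\mathbb{R}^2\to\mathbb{R}^2$ is $\alpha$-conically nonexpansive if there exists a nonexpansive ($1$-Lipschitz) $N$ with $T=(1-\alpha)\mathrm{Id}+\alpha N$. *)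

From Stdlib Require Import Reals Lra.
Open Scope R_scope.

Definition vec2 : Type := (R * R)%type.

Definition vadd (u v : vec2) : vec2 := (fst u + fst v, snd u + snd v).
Definition vscale (c : R) (u : vec2) : vec2 := (c * fst u, c * snd u).
Definition vsub (u v : vec2) : vec2 := (fst u - fst v, snd u - snd v).
Definition vnorm (u : vec2) : R := sqrt (fst u ^ 2 + snd u ^ 2).

Definition nonexpansive (N : vec2 -> vec2) : Prop :=
  forall x y : vec2, vnorm (vsub (N x) (N y)) <= vnorm (vsub x y).

Definition conically_nonexpansive (alpha : R) (T : vec2 -> vec2) : Prop :=
  exists N : vec2 -> vec2, nonexpansive N /\
    forall x : vec2, T x = vadd (vscale (1 - alpha) x) (vscale alpha (N x)).

Definition rot (theta : R) (x : vec2) : vec2 :=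
  (cos theta * fst x - sin theta * snd x, sin theta * fst x + cos theta * snd x).

Definition Rop1 (theta a1 : R) (x : vec2) : vec2 :=
  vadd (vscale (1 - a1) x) (vscale a1 (rot theta x)).
Definition Rop2 (theta a2 : R) (x : vec2) : vec2 :=
  vsub (vscale (1 - a2) x) (vscale a2 (rot theta x)).

Definition kappa (theta a1 a2 : R) : R :=
  a1 + a2 - 2 * a1 * a2 * (sin theta) ^ 2 - (a1 - a2) * cos theta.

(* A conically nonexpansive T with T 0 = 0 satisfies <x, T x> <= |x|^2, being
   an average of the identity and a nonexpansive map fixing 0 (Cauchy-Schwarz).
   For R = R2 R1 and x = e1 a direct computation gives <e1, R e1> = 1 - kappa,
   so kappa < 0 is incompatible with conic nonexpansiveness. *)
From Stdlib Require Import Reals Lra Psatz.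
Open Scope R_scope.

Definition vdot (u v : vec2) : R := fst u * fst v + snd u * snd v.

Lemma vnorm_le_sqr (u v : vec2) :
  vnorm u <= vnorm v -> vdot u u <= vdot v v.
Proof.
  unfold vnorm, vdot; intros Huv.
  apply sqrt_le_0 in Huv; nra.
Qed.

Lemma vnorm_vsub_rot (theta : R) (x y : vec2) :
  vnorm (vsub (rot theta x) (rot theta y)) = vnorm (vsub x y).
Proof.
  destruct x as [x1 x2], y as [y1 y2]; unfold vnorm, vsub, rot; simpl; f_equal.
  pose proof (sin2_cos2 theta) as Hsc; unfold Rsqr in Hsc.
  transitivity ((sin theta ^ 2 + cos theta ^ 2) * ((x1 - y1) ^ 2 + (x2 - y2) ^ 2));
    [ring | rewrite <- Hsc; ring].
Qed.

Lemma rot_nonexpansive (theta : R) : nonexpansive (rot theta).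
Proof. intros x y; rewrite vnorm_vsub_rot; apply Rle_refl. Qed.

Lemma nonexpansive_opp (N : vec2 -> vec2) :
  nonexpansive N -> nonexpansive (fun x => vscale (-1) (N x)).
Proof.
  intros HN x y; eapply Rle_trans; [|apply (HN x y)].
  destruct (N x) as [p1 p2], (N y) as [q1 q2]; unfold vnorm, vsub, vscale; simpl.
  right; f_equal; ring.
Qed.

Lemma nonexpansive_vdot_le (N : vec2 -> vec2) (x : vec2) :
  nonexpansive N -> N (0, 0) = (0, 0) -> vdot x (N x) <= vdot x x.
Proof.
  intros HN HN0.
  assert (HNx : vdot (N x) (N x) <= vdot x x).
  { pose proof (vnorm_le_sqr _ _ (HN x (0, 0))) as H; rewrite HN0 in H.
    destruct (N x) as [p1 p2], x as [x1 x2]; unfold vdot, vsub in *; simpl in *; nra. }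
  destruct (N x) as [p1 p2], x as [x1 x2]; unfold vdot in *; simpl in *.
  (* Lagrange's identity gives Cauchy-Schwarz: <x, p>^2 <= |x|^2 |p|^2 <= |x|^4. *)
  assert (Hcs : (x1 * p1 + x2 * p2) ^ 2 <= (x1 * x1 + x2 * x2) ^ 2).
  { assert (Hl : (x1 * p1 + x2 * p2) ^ 2 + (x1 * p2 - x2 * p1) ^ 2
                 = (x1 * x1 + x2 * x2) * (p1 * p1 + p2 * p2)) by ring.
    assert (Hx : 0 <= x1 * x1 + x2 * x2) by nra.
    pose proof (Rmult_le_compat_l _ _ _ Hx HNx).
    pose proof (pow2_ge_0 (x1 * p2 - x2 * p1)).
    nra. }
  apply Rsqr_incr_0_var; unfold Rsqr; nra.
Qed.

Lemma conically_nonexpansive_vdot_le (alpha : R) (T : vec2 -> vec2) (x : vec2) :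
  0 < alpha -> conically_nonexpansive alpha T -> T (0, 0) = (0, 0) ->
  vdot x (T x) <= vdot x x.
Proof.
  intros Ha [N [HN HT]] HT0.
  assert (HN0 : N (0, 0) = (0, 0)).
  { rewrite HT in HT0; destruct (N (0, 0)) as [u v].
    unfold vadd, vscale in HT0; simpl in HT0; injection HT0 as Hu Hv.
    f_equal; nra. }
  pose proof (nonexpansive_vdot_le N x HN HN0) as HNx.
  rewrite HT; destruct (N x) as [p1 p2], x as [x1 x2].
  unfold vdot, vadd, vscale in *; simpl in *; nra.
Qed.

Lemma conically_nonexpansive_Rop1 (theta a1 : R) :
  conically_nonexpansive a1 (Rop1 theta a1).
Proof. exists (rot theta); split; [apply rot_nonexpansive | reflexivity]. Qed.

Lemma conically_nonexpansive_Rop2 (theta a2 : R) :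
  conically_nonexpansive a2 (Rop2 theta a2).
Proof.
  exists (fun x => vscale (-1) (rot theta x)); split.
  - apply nonexpansive_opp, rot_nonexpansive.
  - intros [x1 x2]; unfold Rop2, vsub, vadd, vscale; simpl; f_equal; ring.
Qed.

Lemma Rop21_0 (theta a1 a2 : R) : Rop2 theta a2 (Rop1 theta a1 (0, 0)) = (0, 0).
Proof. unfold Rop2, Rop1, vsub, vadd, vscale, rot; simpl; f_equal; ring. Qed.

Lemma vdot_e1_Rop21 (theta a1 a2 : R) :
  vdot (1, 0) (Rop2 theta a2 (Rop1 theta a1 (1, 0))) = 1 - kappa theta a1 a2.
Proof.
  pose proof (sin2_cos2 theta) as Hsc; unfold Rsqr in Hsc.
  unfold vdot, Rop2, Rop1, vsub, vadd, vscale, rot; simpl.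
  transitivity (1 - kappa theta a1 a2 - a1 * a2 * (sin theta * sin theta + cos theta * cos theta - 1));
    [unfold kappa; ring | rewrite Hsc; ring].
Qed.

Theorem mainTheorem9 (theta a1 a2 : R) (h1 : 0 < a1) (h2 : 0 < a2) :
  conically_nonexpansive a1 (Rop1 theta a1) /\
  conically_nonexpansive a2 (Rop2 theta a2) /\
  (kappa theta a1 a2 < 0 ->
   ~ (exists alpha : R, 0 < alpha /\
        conically_nonexpansive alpha (fun x => Rop2 theta a2 (Rop1 theta a1 x)))).
Proof.
  split; [apply conically_nonexpansive_Rop1|].
  split; [apply conically_nonexpansive_Rop2|].
  intros Hk [alpha [Ha HR]].
  pose proof (conically_nonexpansive_vdot_le alpha _ (1, 0) Ha HR
                (Rop21_0 theta a1 a2)) as Hle.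
  cbv beta in Hle; rewrite vdot_e1_Rop21 in Hle; unfold vdot in Hle; simpl in Hle; lra.
Qed.
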